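(* Let $N\ge 2$, let $D^N_1,\ldots,D^N_N$ satisfy (A1)–(A3) below, let lower-level demands $D^n_i$ be defined by the consistency recursion below and satisfy (A4), and let costs satisfy $0\le s_1\le s_2\le\cdots\le s_N$. Fix $n\in\{1,\ldots,N-1\}$ and prices $p_1,\ldots,p_{n-1}\ge 0$. If $D^n_n(p_1,\ldots,p_{n-1},s_n)\le 0$, then $D^{n+1}_{n+1}(p_1,\ldots,p_{n-1},s_n,s_{n+1})\le 0$.
   Context: (A1) Each $D_i^N:\mathbb{R}_+^N\to\mathbb{R}$ is smooth, $D_N^N(0,\ldots,0)>0$, $\partial D_i^N/\partial p_i<0$, $\partial D_i^N/\partial p_j>0$ for $j\ne i$. (A2) Exchangeability: $D_i^N(p_1,\ldots,p_i,\ldots,p_j,\ldots,p_N)=D_j^N(p_1,\ldots,p_j,\ldots,p_i,\ldots,p_N)$ for all $i,j$ (entries $i,j$ swapped). (A3) For every $i$ and every vector of other prices there is a finite choke price at which $D_i^N=0$. Consistency recursion: for $n=N-1,\ldots,1$, $D_i^n(p_1,\ldots,p_n)=D_i^{n+1}(p_1,\ldots,p_n,\hat p_{n+1})$ for $i\le n$, where $\hat p_{n+1}(p_1,\ldots,p_n)$ is the unique price with $D^{n+1}_{n+1}(p_1,\ldots,p_n,\hat p_{n+1})=0$. (A4) $\partial D^n_i/\partial p_i<0$ for all $n\le N-1$, $i\le n$. *)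

From HB Require Import structures.
From mathcomp Require Import all_boot all_order all_algebra.
From mathcomp Require Import all_classical all_reals all_analysis.
Set Implicit Arguments. Unset Strict Implicit. Unset Printing Implicit Defensive.
Import Order.TTheory GRing.Theory Num.Theory.
Import numFieldNormedType.Exports.
Local Open Scope classical_set_scope.
Local Open Scope ring_scope.

Section Defs.
Variable R : realType.

(* price vectors of an n-firm market: row vectors; entry j is the price of firm j+1 *)
Definition nonneg n (p : 'rV[R]_n) : Prop := forall j : 'I_n, 0 <= p 0 j.

Definition ext n (p : 'rV[R]_n) (q : R) : 'rV[R]_n.+1 :=
  \row_(j < n.+1) (if unlift ord_max j is Some k then p 0 k else q).

Definition upd n (p : 'rV[R]_n) (i : 'I_n) (c : R) : 'rV[R]_n :=
  \row_(j < n) (if j == i then c else p 0 j).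

(* partial derivative w.r.t. p_i, for a function defined on the closed
   orthant R_+^n (one-sided at the boundary p_i = 0) *)
Definition has_pderiv n (f : 'rV[R]_n -> R) (p : 'rV[R]_n) (i : 'I_n) (d : R)
  : Prop :=
  (fun h : R => h^-1 * (f (upd p i (p 0 i + h)) - f p))
     @ within [set h : R | 0 <= p 0 i + h] (dnbhs (0 : R)) --> d.

Fixpoint iter_dir n (vs : seq 'rV[R]_n) (f : 'rV[R]_n -> R) : 'rV[R]_n -> R :=
  if vs is v :: vs' then 'D_v (iter_dir vs' f) else f.

Definition smooth n (f : 'rV[R]_n -> R) : Prop :=
  forall vs : seq 'rV[R]_n,
    continuous (iter_dir vs f) /\
    forall (v x : 'rV[R]_n), derivable (iter_dir vs f) x v.

End Defs.

From HB Require Import structures.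
From mathcomp Require Import all_boot all_order all_algebra all_fingroup.
From mathcomp Require Import all_classical all_reals all_analysis.
From mathcomp Require Import lra zify.
Set Implicit Arguments. Unset Strict Implicit. Unset Printing Implicit Defensive.
Import Order.TTheory GRing.Theory Num.Theory.
Import numFieldNormedType.Exports.
Local Open Scope classical_set_scope.
Local Open Scope ring_scope.

(* Write P = (p_1, ..., p_{n-1}, s_n) and let q be the choke price of firm
   n+1 at P, so that D^n_i(P) = D^{n+1}_i(P, q).  If q > s_n, raise firm n's
   price from s_n to q: by gross substitutability the demand of firm n+1 does
   not fall, and both firms now charge q.  Lowering firm n+1's price back to
   s_n strictly raises its demand, and by exchangeability the result is
   D^n_n(P) <= 0, contradicting D^{n+1}_{n+1}(P, q) = 0.  Hence
   q <= s_n <= s_{n+1}, and since own demand decreases in own price,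
   D^{n+1}_{n+1}(P, s_{n+1}) <= D^{n+1}_{n+1}(P, q) = 0.
   Exchangeability and gross substitutability are assumed for N firms only;
   they descend through the consistency recursion one level at a time, using
   that the choke price is nondecreasing in the other prices. *)

Section HalfLine.
Context {R : realType}.
Implicit Types (f : R -> R) (t d : R).

Definition has_derive_halfline f t d : Prop :=
  (fun h : R => h^-1 * (f (t + h) - f t))
     @ within [set h : R | 0 <= t + h] (dnbhs (0 : R)) --> d.

Lemma has_derive_halfline_is_derive f t d : 0 < t -> has_derive_halfline f t d ->
  is_derive t 1 f d.
Proof.
move=> t0 fd.
have near_dom : \forall h \near (0 : R)^', 0 <= t + h.
  apply: cvg_within; apply/nbhs_normP; exists t => //= h.
  rewrite /ball_ /= sub0r normrN => ht.
  by have := ler_norm (- h); rewrite normrN; lra.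
have quot : (fun h : R => h^-1 *: ((f \o shift t) (h *: 1) - f t)) @ 0^' --> d.
  have -> : (fun h : R => h^-1 *: ((f \o shift t) (h *: 1) - f t)) =
            (fun h => h^-1 * (f (t + h) - f t)).
    by apply/funext => h /=; rewrite /GRing.scale /= mulr1 (addrC h).
  apply: cvg_trans fd => P /=; rewrite !nbhs_simpl /=.
  by apply: filterS2 near_dom => h Dh; apply.
have df : derivable f t 1 by apply/cvg_ex; exists d.
have <- : 'D_1 f t = d by exact: cvg_lim.
exact: derivableP.
Qed.

Lemma has_derive_halfline_lt0_right f t d b : 0 <= t -> d < 0 ->
  has_derive_halfline f t d -> t < b -> exists2 c, t < c < b & f c < f t.
Proof.
move=> t0 d0 fd tb.
have quot_neg : \forall h \near 0^'+, h^-1 * (f (t + h) - f t) < 0.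
  have : \forall h \near within [set h | 0 <= t + h] 0^',
      h^-1 * (f (t + h) - f t) < 0 by exact: cvgr_lt fd _ d0.
  rewrite !near_withinE; apply: filterS => h qneg h0.
  by apply: qneg; [rewrite gt_eqF | rewrite /= addr_ge0 // ltW].
have near_right : \forall h \near 0^'+,
    0 < h < b - t /\ h^-1 * (f (t + h) - f t) < 0.
  near=> h; split; last by near: h.
  apply/andP; split; near: h; first exact: nbhs_right_gt.
  by apply: nbhs_right_lt; rewrite subr_gt0.
have [h [/andP[h0 hb] qneg]] := filter_ex near_right.
exists (t + h); first by rewrite ltrDl h0 -ltrBrDl hb.
by move: qneg; rewrite pmulr_rlt0 ?invr_gt0 // subr_lt0.
Unshelve. all: by end_near. Qed.

Lemma has_derive_halfline_lt0_decr f :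
  (forall t, 0 <= t -> exists2 d, d < 0 & has_derive_halfline f t d) ->
  forall a b, 0 <= a -> a < b -> f b < f a.
Proof.
move=> fd a b a0 ab.
(* Only a right derivative exists at [a], so first step right to some [c]
   with [f c < f a]; on [[c, b]] the function is differentiable. *)
have [d d0 fad] := fd a a0.
have [c /andP[ac cb] fca] := has_derive_halfline_lt0_right a0 d0 fad ab.
apply: lt_trans fca.
have c0 : 0 < c := le_lt_trans a0 ac.
have der x : c <= x -> derivable f x 1 /\ 'D_1 f x < 0.
  move=> cx; have x0 := lt_le_trans c0 cx.
  have [dx dx0 fdx] := fd x (ltW x0).
  by have [dfx ->] := has_derive_halfline_is_derive x0 fdx.
have in_cb x : x \in `]c, b[ -> c <= x by rewrite in_itv /= => /andP[/ltW].
apply: (@ltr0_derive1_lt_cc _ f c b) => //.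
- by move=> x /in_cb /der [].
- by move=> x /in_cb /der []; rewrite derive1E.
- apply: derivable_within_continuous => x.
  by rewrite in_itv /= => /andP[/der []].
- by rewrite in_itv /= lexx ltW.
- by rewrite in_itv /= lexx ltW.
Qed.
End HalfLine.

Lemma tpermM_conj (T : finType) (i j l : T) : l != i -> l != j -> i != j ->
  (tperm j l * tperm i j * tperm l i)%g = tperm i j.
Proof.
move=> li lj ij; apply/permP => x; rewrite !permM.
case: (tpermP j l x) => [->|->|/eqP xj /eqP xl].
- by rewrite tpermR [tperm i j l]tpermD 1?eq_sym // tpermL.
- by rewrite tpermR [tperm i j l]tpermD 1?eq_sym // tpermR.
have [->|xi] := eqVneq x i; first by rewrite tpermL tpermD.
by rewrite !tpermD // eq_sym.
Qed.

Section PriceVectors.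
Context {R : realType}.
Implicit Types (n : nat) (c q t : R).

Lemma lift_max_widen n (i : 'I_n) : lift ord_max i = widen_ord (leqnSn n) i.
Proof. by apply: val_inj; exact: lift_max. Qed.

Lemma widen_neq_max n (i : 'I_n) : widen_ord (leqnSn n) i != ord_max.
Proof. by rewrite -lift_max_widen eq_sym neq_lift. Qed.

Lemma eq_widen_ord n (i j : 'I_n) :
  (widen_ord (leqnSn n) i == widen_ord (leqnSn n) j) = (i == j).
Proof. by []. Qed.

Lemma widen_ord_max_ind n (P : 'I_n.+1 -> Prop) :
  (forall i, P (widen_ord (leqnSn n) i)) -> P ord_max -> forall k, P k.
Proof.
by move=> Pw Pmax k; case: (unliftP ord_max k) => [j ->|->] //; rewrite lift_max_widen.
Qed.

Lemma ext_widen n (p : 'rV[R]_n) q i : ext p q 0 (widen_ord (leqnSn n) i) = p 0 i.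
Proof. by rewrite mxE -lift_max_widen liftK. Qed.

Lemma ext_max n (p : 'rV[R]_n) q : ext p q 0 ord_max = q.
Proof. by rewrite mxE unlift_none. Qed.

Lemma upd_at n (p : 'rV[R]_n) i c : upd p i c 0 i = c.
Proof. by rewrite mxE eqxx. Qed.

Lemma upd_ne n (p : 'rV[R]_n) i j c : j != i -> upd p i c 0 j = p 0 j.
Proof. by rewrite mxE => /negbTE ->. Qed.

Lemma xcol_rowE n (p : 'rV[R]_n) a b k : xcol a b p 0 k = p 0 (tperm a b k).
Proof. by rewrite mxE. Qed.

Lemma rowP0 n (p p' : 'rV[R]_n) : (forall k, p 0 k = p' 0 k) -> p = p'.
Proof. by move=> pp'; apply/rowP => k; apply: pp'. Qed.

Lemma upd_upd n (p : 'rV[R]_n) i c c' : upd (upd p i c) i c' = upd p i c'.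
Proof.
apply: rowP0 => k; have [->|ki] := eqVneq k i; first by rewrite !upd_at.
by rewrite !upd_ne.
Qed.

Lemma upd_id n (p : 'rV[R]_n) i : upd p i (p 0 i) = p.
Proof.
apply: rowP0 => k; have [->|ki] := eqVneq k i; first by rewrite upd_at.
by rewrite upd_ne.
Qed.

Lemma ext_upd n (p : 'rV[R]_n) j c q :
  ext (upd p j c) q = upd (ext p q) (widen_ord (leqnSn n) j) c.
Proof.
apply: rowP0; apply: widen_ord_max_ind => [i|].
  rewrite ext_widen; have [->|ij] := eqVneq i j; first by rewrite !upd_at.
  by rewrite !upd_ne ?ext_widen.
by rewrite upd_ne ?ext_max // eq_sym widen_neq_max.
Qed.

Lemma upd_ext_max n (p : 'rV[R]_n) q q' : upd (ext p q) ord_max q' = ext p q'.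
Proof.
apply: rowP0; apply: widen_ord_max_ind => [i|]; last by rewrite upd_at ext_max.
by rewrite upd_ne ?ext_widen // widen_neq_max.
Qed.

Lemma ext_xcol n (p : 'rV[R]_n) i j q :
  ext (xcol i j p) q =
  xcol (widen_ord (leqnSn n) i) (widen_ord (leqnSn n) j) (ext p q).
Proof.
apply: rowP0; apply: widen_ord_max_ind => [k|].
  rewrite ext_widen !xcol_rowE.
  have [->|ki] := eqVneq k i; first by rewrite !tpermL ext_widen.
  have [->|kj] := eqVneq k j; first by rewrite !tpermR ext_widen.
  by rewrite !tpermD ?ext_widen // eq_sym.
by rewrite xcol_rowE tpermD ?ext_max // widen_neq_max.
Qed.

Lemma xcol_upd n (p : 'rV[R]_n) a b : a != b ->
  xcol a b p = upd (upd p a (p 0 b)) b (p 0 a).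
Proof.
move=> ab; apply: rowP0 => k; rewrite xcol_rowE.
have [->|kb] := eqVneq k b; first by rewrite tpermR upd_at.
rewrite upd_ne //; have [->|ka] := eqVneq k a; first by rewrite tpermL upd_at.
by rewrite upd_ne // tpermD // eq_sym.
Qed.

Lemma xcol_id n (p : 'rV[R]_n) i : xcol i i p = p.
Proof. by rewrite /xcol tperm1 col_perm1. Qed.

Lemma xcol_conj n (p : 'rV[R]_n) i j l : l != i -> l != j -> i != j ->
  xcol j l (xcol i j (xcol l i p)) = xcol i j p.
Proof. by move=> li lj ij; rewrite /xcol -!col_permM tpermM_conj. Qed.

Lemma nonneg_upd n (p : 'rV[R]_n) j c : nonneg p -> 0 <= c -> nonneg (upd p j c).
Proof. by move=> p0 c0 k; rewrite mxE; case: ifP. Qed.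

Lemma nonneg_ext n (p : 'rV[R]_n) q : nonneg p -> 0 <= q -> nonneg (ext p q).
Proof. by move=> p0 q0 k; rewrite mxE; case: unlift. Qed.

Lemma nonneg_xcol n (p : 'rV[R]_n) a b : nonneg p -> nonneg (xcol a b p).
Proof. by move=> p0 k; rewrite xcol_rowE. Qed.

End PriceVectors.

Section PartialDerivatives.
Context {R : realType}.
Variables (n : nat) (F : 'rV[R]_n -> R) (j : 'I_n).

Lemma has_pderiv_upd (p : 'rV[R]_n) t d : has_pderiv F (upd p j t) j d ->
  has_derive_halfline (fun s => F (upd p j s)) t d.
Proof. by rewrite /has_pderiv upd_at; under eq_fun do rewrite upd_upd. Qed.

Lemma pderiv_lt0_decr :
  (forall p, nonneg p -> exists d, has_pderiv F p j d /\ d < 0) ->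
  forall p t t', nonneg p -> 0 <= t -> t < t' -> F (upd p j t') < F (upd p j t).
Proof.
move=> dF p t t' p0.
apply: (@has_derive_halfline_lt0_decr _ (fun s => F (upd p j s))) => s s0.
have [d [Fd d0]] := dF _ (nonneg_upd j p0 s0).
by exists d => //; apply: has_pderiv_upd.
Qed.

End PartialDerivatives.

Lemma pderiv_gt0_incr {R : realType} n (F : 'rV[R]_n -> R) j :
  (forall p, nonneg p -> exists d, has_pderiv F p j d /\ 0 < d) ->
  forall p t t', nonneg p -> 0 <= t -> t < t' -> F (upd p j t) < F (upd p j t').
Proof.
move=> dF p t t' p0 t0 tt'; rewrite -ltrN2.
apply: (@pderiv_lt0_decr _ _ (fun q => - F q)) => // q q0.
have [d [Fd d0]] := dF _ q0; exists (- d); split; last by rewrite oppr_lt0.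
move: Fd => /cvgN; apply: cvg_trans; apply: near_eq_cvg; apply: nearW => h /=.
by rewrite -opprD mulrN.
Qed.

Section DemandSystem.
Context {R : realType}.
Variable D : forall n : nat, 'rV[R]_n -> 'I_n -> R.
Arguments D : clear implicits.
Implicit Types (k : nat) (c q t : R).

Definition exchangeable k := forall (p : 'rV[R]_k) (i j : 'I_k), nonneg p ->
  D k p i = D k (xcol i j p) j.

Definition gross_substitutes k := forall (p : 'rV[R]_k) (i j : 'I_k) c,
  nonneg p -> i != j -> p 0 j <= c -> D k p i <= D k (upd p j c) i.

Definition own_price_decreasing k := forall (p : 'rV[R]_k) (i : 'I_k) t t',
  nonneg p -> 0 <= t -> t < t' -> D k (upd p i t') i < D k (upd p i t) i.

Definition consistent k := forall p : 'rV[R]_k, nonneg p ->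
  exists q, [/\ 0 <= q, D k.+1 (ext p q) ord_max = 0,
    (forall q', 0 <= q' -> D k.+1 (ext p q') ord_max = 0 -> q' = q) &
    forall i : 'I_k, D k p i = D k.+1 (ext p q) (widen_ord (leqnSn k) i)].

Lemma own_price_decreasing_pderiv k :
  (forall (p : 'rV[R]_k) (i : 'I_k), nonneg p ->
     exists d, has_pderiv (fun p' => D k p' i) p i d /\ d < 0) ->
  own_price_decreasing k.
Proof.
by move=> dD p i; apply: (@pderiv_lt0_decr _ _ (fun p' => D k p' i)) => *; apply: dD.
Qed.

Lemma gross_substitutes_pderiv k :
  (forall (p : 'rV[R]_k) (i j : 'I_k), nonneg p -> i != j ->
     exists d, has_pderiv (fun p' => D k p' i) p j d /\ 0 < d) ->
  gross_substitutes k.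
Proof.
move=> dD p i j c p0 ij; rewrite le_eqVlt => /predU1P[<-|pc].
  by rewrite upd_id.
rewrite -{1}(upd_id p j); apply: ltW.
by apply: (@pderiv_gt0_incr _ _ (fun p' => D k p' i)) => // *; apply: dD.
Qed.

Lemma own_price_nonincreasing k : own_price_decreasing k ->
  forall (p : 'rV[R]_k) i t t', nonneg p -> 0 <= t -> t <= t' ->
  D k (upd p i t') i <= D k (upd p i t) i.
Proof.
move=> Dk p i t t' p0 t0; rewrite le_eqVlt => /predU1P[-> //|tt'].
exact/ltW/Dk.
Qed.

Lemma exchangeable_other k : exchangeable k ->
  forall (p : 'rV[R]_k) i j l, nonneg p -> l != i -> l != j ->
  D k p l = D k (xcol i j p) l.
Proof.
move=> Dk p i j l p0 li lj; have [<-|ij] := eqVneq i j; first by rewrite xcol_id.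
have p1 := nonneg_xcol l i p0; have p2 := nonneg_xcol i j p1.
by rewrite (Dk p l i) // (Dk _ i j) // (Dk _ j l) // xcol_conj.
Qed.

Lemma price_le_of_demand_le k (p : 'rV[R]_k) (a b : 'I_k) :
  exchangeable k -> gross_substitutes k -> own_price_decreasing k ->
  nonneg p -> a != b -> D k p a <= D k p b -> p 0 b <= p 0 a.
Proof.
move=> exch subst own p0 ab Dab; rewrite leNgt; apply/negP => pab.
pose p' := upd p a (p 0 b).
have p'0 : nonneg p' by apply: nonneg_upd.
have Dbp' : D k p b <= D k p' b.
  by apply: subst => //; [rewrite eq_sym | exact: ltW].
have swap : upd p' b (p 0 a) = xcol a b p by rewrite xcol_upd.
have p'b : p' 0 b = p 0 b by rewrite upd_ne // eq_sym.
have own_b : D k p' b < D k p a.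
  by rewrite (exch p a b) // -swap -{1}(upd_id p' b) p'b; apply: own.
by have := le_lt_trans (le_trans Dab Dbp') own_b; rewrite ltxx.
Qed.

Lemma exchangeable_consistent k :
  consistent k -> exchangeable k.+1 -> exchangeable k.
Proof.
move=> cons exch p i j p0.
have [q [q0 qz _ qD]] := cons p p0.
have [q' [_ _ q'_uniq q'D]] := cons _ (nonneg_xcol i j p0).
have pq0 := nonneg_ext p0 q0.
have qq' : q = q'.
  apply: q'_uniq => //; rewrite ext_xcol -exchangeable_other //;
    by rewrite eq_sym widen_neq_max.
by rewrite qD q'D -qq' ext_xcol -exch.
Qed.

Lemma choke_price_upd k (p : 'rV[R]_k) j c q q' :
  gross_substitutes k.+1 -> own_price_decreasing k.+1 ->
  nonneg p -> p 0 j <= c -> 0 <= q' ->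
  D k.+1 (ext p q) ord_max = 0 -> D k.+1 (ext (upd p j c) q') ord_max = 0 ->
  q <= q'.
Proof.
move=> subst own p0 pc q'0 qz q'z; rewrite leNgt; apply/negP => q'q.
have p'0 : nonneg (upd p j c) by apply: nonneg_upd (le_trans (p0 j) pc).
have subst_q : 0 <= D k.+1 (ext (upd p j c) q) ord_max.
  rewrite -qz ext_upd; apply: subst; rewrite ?ext_widen //.
  - by apply: nonneg_ext; rewrite // ltW // (le_lt_trans q'0 q'q).
  - by rewrite eq_sym widen_neq_max.
have := own _ ord_max _ _ (nonneg_ext p'0 q'0) q'0 q'q.
rewrite !upd_ext_max q'z => own_q.
by have := le_lt_trans subst_q own_q; rewrite ltxx.
Qed.

Lemma gross_substitutes_consistent k : consistent k ->
  gross_substitutes k.+1 -> own_price_decreasing k.+1 -> gross_substitutes k.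
Proof.
move=> cons subst own p i j c p0 ij pc.
have p'0 : nonneg (upd p j c) by apply: nonneg_upd (le_trans (p0 j) pc).
have [q [q0 qz _ qD]] := cons p p0.
have [q' [q'0 q'z _ q'D]] := cons _ p'0.
have qq' : q <= q' by apply: (choke_price_upd subst own p0 pc).
rewrite qD q'D (le_trans (y := D k.+1 (ext (upd p j c) q) (widen_ord (leqnSn k) i))) //.
  by rewrite ext_upd; apply: subst; rewrite ?ext_widen ?eq_widen_ord //; apply: nonneg_ext.
rewrite -(upd_ext_max _ q q'); apply: subst; rewrite ?ext_max ?widen_neq_max //.
exact: nonneg_ext.
Qed.

Lemma consistent_descend n d :
  (forall k, (n <= k < n + d)%N -> consistent k /\ own_price_decreasing k.+1) ->
  exchangeable (n + d) -> gross_substitutes (n + d) ->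
  exchangeable n /\ gross_substitutes n.
Proof.
elim: d n => [|d IH] n below; first by rewrite addn0.
rewrite -addSnnS => exch subst.
have [exch1 subst1] : exchangeable n.+1 /\ gross_substitutes n.+1.
  by apply: IH => // k kd; apply: below; lia.
have [cons own] : consistent n /\ own_price_decreasing n.+1 by apply: below; lia.
by split; [apply: exchangeable_consistent | apply: gross_substitutes_consistent].
Qed.
End DemandSystem.

Lemma nondecreasing_ge0 {R : realType} (s : nat -> R) N :
  0 <= s 1%N -> (forall k, (1 <= k)%N -> (k < N)%N -> s k <= s k.+1) ->
  forall k, (1 <= k <= N)%N -> 0 <= s k.
Proof.
move=> s1 s_mono; elim=> [//|[_ //|k IH] /andP[_ kN]].
have sk0 : 0 <= s k.+1 by apply: IH; exact: ltnW.
by apply: (le_trans sk0); apply: s_mono.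
Qed.

Theorem lemma2p1 (R : realType) (N : nat)
  (D : forall n : nat, 'rV[R]_n -> 'I_n -> R) (s : nat -> R) :
  (2 <= N)%N ->
  (* (A1) *)
  (forall i : 'I_N, smooth (fun p => D N p i)) ->
  (forall i : 'I_N, i = N.-1 :> nat -> 0 < D N 0 i) ->
  (forall (p : 'rV[R]_N) (i : 'I_N), nonneg p ->
     exists d, has_pderiv (fun q => D N q i) p i d /\ d < 0) ->
  (forall (p : 'rV[R]_N) (i j : 'I_N), nonneg p -> i != j ->
     exists d, has_pderiv (fun q => D N q i) p j d /\ 0 < d) ->
  (* (A2) exchangeability *)
  (forall (p : 'rV[R]_N) (i j : 'I_N), nonneg p ->
     D N p i = D N (xcol i j p) j) ->
  (* (A3) finite choke price *)
  (forall (p : 'rV[R]_N) (i : 'I_N), nonneg p ->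
     exists c : R, 0 <= c /\ D N (upd p i c) i = 0) ->
  (* consistency recursion, n = N-1, ..., 1 *)
  (forall n : nat, (0 < n)%N -> (n < N)%N -> forall p : 'rV[R]_n, nonneg p ->
     exists q : R, [/\ 0 <= q, D n.+1 (ext p q) ord_max = 0,
       (forall q' : R, 0 <= q' -> D n.+1 (ext p q') ord_max = 0 -> q' = q) &
       forall i : 'I_n, D n p i = D n.+1 (ext p q) (widen_ord (leqnSn n) i)]) ->
  (* (A4) *)
  (forall n : nat, (0 < n)%N -> (n < N)%N -> forall (p : 'rV[R]_n) (i : 'I_n),
     nonneg p -> exists d, has_pderiv (fun q => D n q i) p i d /\ d < 0) ->
  (* costs 0 <= s_1 <= ... <= s_N *)
  0 <= s 1%N ->
  (forall k : nat, (1 <= k)%N -> (k < N)%N -> s k <= s k.+1) ->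
  (* n = m+1 in {1,...,N-1}, prices (p_1,...,p_{n-1}) = p *)
  forall (m : nat) (p : 'rV[R]_m), (m.+2 <= N)%N -> nonneg p ->
    D m.+1 (ext p (s m.+1)) ord_max <= 0 ->
    D m.+2 (ext (ext p (s m.+1)) (s m.+2)) ord_max <= 0.
Proof.
move=> _ _ _ own_N subst_N exch_N _ cons own_below s1 s_mono m p mN p0 Dle0.
have own k : (0 < k <= N)%N -> own_price_decreasing D k.
  case/andP=> k0; rewrite leq_eqVlt => /predU1P[-> | kN].
    exact: own_price_decreasing_pderiv.
  exact/own_price_decreasing_pderiv/own_below.
have own_m : own_price_decreasing D m.+2 by apply: own; lia.
have [exch subst] : exchangeable D m.+2 /\ gross_substitutes D m.+2.
  apply: (@consistent_descend _ _ _ (N - m.+2)); rewrite ?subnKC //.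
    by move=> k kN; split; [apply: cons | apply: own]; lia.
  exact: gross_substitutes_pderiv.
have sm0 : 0 <= s m.+1 by apply: (nondecreasing_ge0 s1 s_mono); lia.
set P := ext p (s m.+1) in Dle0 *.
have P0 : nonneg P := nonneg_ext p0 sm0.
have [q [q0 qz _ qD]] := cons m.+1 isT mN P P0.
have Pq0 := nonneg_ext P0 q0.
have qs : q <= s m.+1.
  have := price_le_of_demand_le exch subst own_m Pq0 (widen_neq_max ord_max).
  by rewrite ext_widen ext_max /P ext_max -qD qz; apply.
have sq : q <= s m.+2 := le_trans qs (s_mono m.+1 isT mN).
have := own_price_nonincreasing own_m ord_max Pq0 q0 sq.
by rewrite !upd_ext_max qz.
Qed.
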